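(* Let $A:=\{u_i\mid i\in I\}\subseteq\mathbb{R}^n$ be an indexed family with $\operatorname{card}I\ge n+1$ and $o\notin\operatorname{conv}A$. Then there exist nonempty sets $I_1,I_2\subseteq I$ with $I_1\cap I_2=\emptyset$, $I_1\cup I_2=I$ and $\operatorname{conv}A_1\cap\big((0,1]\operatorname{conv}A_2\big)\neq\emptyset$, where $A_k:=\{u_i\mid i\in I_k\}$ for $k\in\{1,2\}$.
   Context: $n\ge2$; $o$ denotes the zero vector of $\mathbb{R}^n$; $(0,1]B:=\{tb\mid t\in(0,1],b\in B\}$; $\operatorname{conv}$ denotes convex hull. *)

From mathcomp Require Import all_boot all_order all_algebra.
From mathcomp Require Import reals.
Set Implicit Arguments. Unset Strict Implicit. Unset Printing Implicit Defensive.
Import Order.TTheory GRing.Theory Num.Theory.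
Local Open Scope ring_scope.

Definition conv (R : realType) (n : nat) (A : 'rV[R]_n -> Prop) : 'rV[R]_n -> Prop :=
  fun x => exists (m : nat) (w : 'I_m -> R) (p : 'I_m -> 'rV[R]_n),
    [/\ forall i, 0 <= w i, \sum_(i < m) w i = 1, forall i, A (p i)
      & x = \sum_(i < m) w i *: p i].

Definition fam_img (I : Type) (R : realType) (n : nat) (u : I -> 'rV[R]_n)
  (J : I -> Prop) : 'rV[R]_n -> Prop := fun x => exists2 i, J i & x = u i.

Definition scale01 (R : realType) (n : nat) (B : 'rV[R]_n -> Prop) : 'rV[R]_n -> Prop :=
  fun x => exists t b, [/\ 0 < t, t <= 1, B b & x = t *: b].

From mathcomp Require Import all_boot all_order all_algebra.
From mathcomp Require Import reals.
From Stdlib Require Import Classical.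
Import Order.TTheory GRing.Theory Num.Theory.
Local Open Scope ring_scope.

(* Pick n+1 distinct indices; the corresponding vectors of R^n are linearly
   dependent, so some nontrivial relation  \sum_j c_j u_j = 0  holds.  Split
   each coefficient into its positive and negative parts; the relation says
   that the positive and the negative combinations are the same vector.  As
   o is not in conv A, the relation cannot have all its coefficients of one
   sign, so both masses a = \sum c_j^+ and b = \sum c_j^- are positive; after
   possibly negating c we may assume b <= a.  Put in I2 the indices with a
   negative coefficient and everything else in I1.  Normalizing, the common
   vector divided by a lies in conv A1, and equals (b/a) times a point of
   conv A2, with b/a in (0,1].

   The argument works for every n. *)

Section PositivePart.
Context {R : realDomainType}.

(* The positive part x^+ of x; the negative part is written pospart (- x). *)
Definition pospart (x : R) : R := if 0 < x then x else 0.

Lemma pospart_ge0 (x : R) : 0 <= pospart x.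
Proof. by rewrite /pospart; case: ifP => // /ltW. Qed.

Lemma pospart_gt0 (x : R) : (0 < pospart x) = (0 < x).
Proof. by rewrite /pospart; case: ifP => //; rewrite ltxx. Qed.

Lemma pospart_sub (x : R) : pospart x - pospart (- x) = x.
Proof.
rewrite /pospart oppr_gt0.
by case: (ltgtP x 0) => [_|_|->]; rewrite ?subr0 ?sub0r ?opprK.
Qed.

Lemma psumr_gt0 {m : nat} {d : 'I_m -> R} {j : 'I_m} :
  (forall i, 0 <= d i) -> d j != 0 -> 0 < \sum_i d i.
Proof.
move=> d_ge0 dj_neq0; rewrite lt_def sumr_ge0 // andbT psumr_neq0 //.
by apply/hasP; exists j; rewrite ?mem_index_enum // lt_def dj_neq0 d_ge0.
Qed.

Lemma psumr_gt0_witness {m : nat} {d : 'I_m -> R} :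
  (forall i, 0 <= d i) -> 0 < \sum_i d i -> exists j, 0 < d j.
Proof.
move=> d_ge0 D_gt0.
have /hasP[j _ /andP[_ dj_gt0]] : has (fun i => true && (0 < d i)) (index_enum 'I_m).
  by rewrite -psumr_neq0 // gt_eqF.
by exists j.
Qed.

End PositivePart.

Lemma conv_normalized (R : realType) (n m : nat) (A : 'rV[R]_n -> Prop)
  (d : 'I_m -> R) (v : 'I_m -> 'rV[R]_n) :
  (forall j, 0 <= d j) -> 0 < \sum_j d j -> (forall j, 0 < d j -> A (v j)) ->
  conv A ((\sum_j d j)^-1 *: \sum_j d j *: v j).
Proof.
move=> d_ge0 D_gt0 dA; set D := \sum_j d j.
have [j0 dj0_gt0] := psumr_gt0_witness d_ge0 D_gt0.
exists m, (fun j => d j / D), (fun j => if 0 < d j then v j else v j0); split.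
- by move=> j; rewrite divr_ge0 // ltW.
- by rewrite -mulr_suml mulfV // gt_eqF.
- by move=> j; case: ifP => [/dA|_]; last exact: dA.
- rewrite scaler_sumr; apply: eq_bigr => j _; rewrite scalerA mulrC.
  case: ifP => // /negbT; rewrite lt_def d_ge0 andbT negbK => /eqP ->.
  by rewrite mul0r !scale0r.
Qed.

Lemma rows_dependent {F : fieldType} {m n : nat} (lt_nm : (n < m)%N)
  (v : 'I_m -> 'rV[F]_n) :
  exists2 c : 'I_m -> F, exists j, c j != 0 & \sum_j c j *: v j = 0.
Proof.
pose M : 'M[F]_(m, n) := \matrix_i v i.
have ker_neq0 : kermx M != 0.
  rewrite -mxrank_eq0 mxrank_ker subn_eq0 -ltnNge.
  exact: leq_ltn_trans (rank_leq_col M) lt_nm.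
have [w /sub_kermxP wM0 w_neq0] := rowV0Pn ker_neq0.
exists (w 0); last first.
  by rewrite -[RHS]wM0 mulmx_sum_row; apply: eq_bigr => j _; rewrite rowK.
apply/existsP; apply: contraNT w_neq0 => /existsPn w0.
by apply/eqP/rowP => j; rewrite mxE; apply/eqP; rewrite -[_ == _]negbK w0.
Qed.

Section PartitionFromRelation.
Context {R : realType} {n : nat} {I : Type} {u : I -> 'rV[R]_n}.
Hypothesis o_notin_conv : ~ conv (fam_img u (fun _ => True)) 0.
Context {m : nat} {f : 'I_m -> I} {c : 'I_m -> R}.
Hypothesis c_nontrivial : exists j, c j != 0.
Hypothesis c_relation : \sum_j c j *: u (f j) = 0.

(* The relation has a negative coefficient: otherwise normalizing it would
   exhibit o as a convex combination of points of A. *)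
Lemma relation_negative_mass : 0 < \sum_j pospart (- c j).
Proof.
rewrite lt_def sumr_ge0 => [|j _]; last exact: pospart_ge0.
rewrite andbT; apply/negP => /eqP neg0; apply: o_notin_conv.
have c_ge0 j : 0 <= c j.
  rewrite -(pospart_sub (c j)) (psumr_eq0P (fun j _ => pospart_ge0 (- c j)) neg0) //.
  by rewrite subr0 pospart_ge0.
have [j0 cj0_neq0] := c_nontrivial.
have in_A j : fam_img u (fun _ => True) (u (f j)) by exists (f j).
have := @conv_normalized R n m _ c (fun j => u (f j)) c_ge0 (psumr_gt0 c_ge0 cj0_neq0)
  (fun j _ => in_A j).
by rewrite c_relation scaler0.
Qed.

Lemma partition_from_relation :
  injective f -> \sum_j pospart (- c j) <= \sum_j pospart (c j) ->
  exists I1 I2 : I -> Prop,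
    [/\ (exists i, I1 i), (exists i, I2 i),
        (forall i, ~ (I1 i /\ I2 i)),
        (forall i, I1 i \/ I2 i)
      & exists x, conv (fam_img u I1) x /\ scale01 (conv (fam_img u I2)) x].
Proof.
move=> f_inj b_le_a; set a := \sum_j pospart (c j); set b := \sum_j pospart (- c j).
have b_gt0 : 0 < b := relation_negative_mass.
have a_gt0 : 0 < a := lt_le_trans b_gt0 b_le_a.
have pos_eq_neg : \sum_j pospart (c j) *: u (f j) = \sum_j pospart (- c j) *: u (f j).
  apply/eqP; rewrite -subr_eq0 -sumrB; apply/eqP; rewrite -[RHS]c_relation.
  by apply: eq_bigr => j _; rewrite -scalerBl pospart_sub.
pose I2 i := exists j, c j < 0 /\ i = f j.
have notI2 j : 0 < c j -> ~ I2 (f j).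
  by move=> cj_gt0 [j' [cj'_lt0 /f_inj eq_jj']]; rewrite eq_jj' ltNge ltW in cj_gt0.
have I2f j : 0 < - c j -> I2 (f j) by rewrite oppr_gt0 => cj_lt0; exists j.
exists (fun i => ~ I2 i), I2; split.
- have [j] := psumr_gt0_witness (fun j => pospart_ge0 (c j)) a_gt0.
  by rewrite pospart_gt0 => /notI2; exists (f j).
- have [j] := psumr_gt0_witness (fun j => pospart_ge0 (- c j)) b_gt0.
  by rewrite pospart_gt0 => /I2f; exists (f j).
- by move=> i [].
- by move=> i; case: (classic (I2 i)); [right|left].
exists (a^-1 *: \sum_j pospart (c j) *: u (f j)); split.
  apply: conv_normalized => [j|//|j]; first exact: pospart_ge0.
  by rewrite pospart_gt0 => /notI2; exists (f j).
exists (b / a), (b^-1 *: \sum_j pospart (- c j) *: u (f j)); split.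
- by rewrite divr_gt0.
- by rewrite ler_pdivrMr // mul1r.
- apply: conv_normalized => [j|//|j]; first exact: pospart_ge0.
  by rewrite pospart_gt0 => /I2f; exists (f j).
- by rewrite scalerA pos_eq_neg mulrAC mulfV ?gt_eqF // mul1r.
Qed.

End PartitionFromRelation.

Theorem mainTheorem9 (R : realType) (n : nat) (hn : (2 <= n)%N)
  (I : Type) (u : I -> 'rV[R]_n)
  (hcard : exists f : 'I_n.+1 -> I, injective f)
  (ho : ~ conv (fam_img u (fun _ => True)) 0) :
  exists I1 I2 : I -> Prop,
    [/\ (exists i, I1 i), (exists i, I2 i),
        (forall i, ~ (I1 i /\ I2 i)),
        (forall i, I1 i \/ I2 i)
      & exists x, conv (fam_img u I1) x /\ scale01 (conv (fam_img u I2)) x].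
Proof.
have [f f_inj] := hcard.
have [c c_nontrivial c_relation] := rows_dependent (ltnSn n) (fun j => u (f j)).
have [b_le_a|a_lt_b] := leP (\sum_j pospart (- c j)) (\sum_j pospart (c j)).
  exact (partition_from_relation ho c_nontrivial c_relation f_inj b_le_a).
(* Otherwise the negated relation has the larger positive mass. *)
have negc_nontrivial : exists j, - c j != 0.
  by have [j cj_neq0] := c_nontrivial; exists j; rewrite oppr_eq0.
have negc_relation : \sum_j - c j *: u (f j) = 0.
  under eq_bigr do rewrite scaleNr.
  by rewrite sumrN c_relation oppr0.
apply: (partition_from_relation ho negc_nontrivial negc_relation f_inj).
by under eq_bigr do rewrite opprK; exact: ltW.
Qed.
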